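(* Let $(\mathcal C,\otimes,I,a,l,r)$ be a monoidal category, let $(F,\Delta,\varepsilon,F_2,F_0)$ and $(G,\delta,\epsilon,G_2,G_0)$ be bicomonads on $\mathcal C$ and $\varphi:FG\to GF$ a comonad distributive law. Then $\varphi$ is a monoidal comonad distributive law if and only if the smash coproduct $FG$, i.e. the comonad with comultiplication $X\mapsto F\varphi_{GX}\circ FF\delta_X\circ\Delta_{GX}$ and counit $X\mapsto \epsilon_X\circ\varepsilon_{GX}$, equipped with the monoidal functor structure $(FG)_2(M,N)=F(G_2(M,N))\circ F_2(GM,GN)$ and $(FG)_0=F(G_0)\circ F_0$, is a bicomonad on $\mathcal C$.
   Context: A comonad $(F,\Delta,\varepsilon)$ on a category is an endofunctor with natural $\Delta:F\to FF$, $\varepsilon:F\to\mathrm{id}$ satisfying $F\Delta\circ\Delta=\Delta F\circ\Delta$, $F\varepsilon\circ\Delta=\varepsilon F\circ\Delta=\mathrm{id}_F$. For comonads $(F,\Delta,\varepsilon)$, $(G,\delta,\epsilon)$, a comonad distributive law is a natural $\varphi:FG\to GF$ with $G\varphi\circ\varphi G\circ F\delta=\delta F\circ\varphi$, $\varphi F\circ F\varphi\circ\Delta G=G\Delta\circ\varphi$, $G\varepsilon\circ\varphi=\varepsilon G$, $\epsilon F\circ\varphi=F\epsilon$; then $FG$ with the stated comultiplication and counit is a comonad. A bicomonad on a monoidal category is a comonad $(G,\delta,\epsilon)$ which is also a monoidal functor $(G,G_2,G_0)$ ($G_2(X,Y):GX\otimes GY\to G(X\otimes Y)$ natural, $G_0:I\to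 GI$, satisfying the usual coherence with $a,l,r$) such that $G(G_2(X,Y))\circ G_2(GX,GY)\circ(\delta_X\otimes\delta_Y)=\delta_{X\otimes Y}\circ G_2(X,Y)$, $\epsilon_{X\otimes Y}\circ G_2(X,Y)=\epsilon_X\otimes\epsilon_Y$, $G(G_0)\circ G_0=\delta_I\circ G_0$, $\epsilon_I\circ G_0=\mathrm{id}_I$. A comonad distributive law $\varphi$ between bicomonads $F,G$ is called monoidal if for all $M,N$: $\varphi_{M\otimes N}\circ F(G_2(M,N))\circ F_2(GM,GN)=G(F_2(M,N))\circ G_2(FM,FN)\circ(\varphi_M\otimes\varphi_N)$ and $\varphi_I\circ F(G_0)\circ F_0=G(F_0)\circ G_0$. *)

Record Category := {
  ob : Type;
  hom : ob -> ob -> Type;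
  idm : forall A, hom A A;
  comp : forall A B C, hom B C -> hom A B -> hom A C;
  comp_id_l : forall A B (f : hom A B), comp A B B (idm B) f = f;
  comp_id_r : forall A B (f : hom A B), comp A A B f (idm A) = f;
  comp_assoc : forall A B C D (f : hom C D) (g : hom B C) (h : hom A B),
      comp A C D f (comp A B C g h) = comp A B D (comp B C D f g) h
}.
Arguments hom {c} _ _.
Arguments idm {c} A.
Arguments comp {c A B C} _ _.
Coercion ob : Category >-> Sortclass.
Notation "f ∘ g" := (comp f g) (at level 40, left associativity).

Record MonoidalCategory := {
  mcat : Category;
  tens : ob mcat -> ob mcat -> ob mcat;
  tensm : forall A B C D, @hom mcat A B -> @hom mcat C D -> @hom mcat (tens A C) (tens B D);
  tensm_id : forall A B, tensm A A B B (idm A) (idm B) = idm (tens A B);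
  tensm_comp : forall A1 A2 A3 B1 B2 B3 (f1 : @hom mcat A1 A2) (f2 : @hom mcat A2 A3)
                 (g1 : @hom mcat B1 B2) (g2 : @hom mcat B2 B3),
      tensm A1 A3 B1 B3 (f2 ∘ f1) (g2 ∘ g1)
      = tensm A2 A3 B2 B3 f2 g2 ∘ tensm A1 A2 B1 B2 f1 g1;
  unitob : ob mcat;
  assoc : forall X Y Z, @hom mcat (tens (tens X Y) Z) (tens X (tens Y Z));
  assoc_inv : forall X Y Z, @hom mcat (tens X (tens Y Z)) (tens (tens X Y) Z);
  assoc_iso1 : forall X Y Z, assoc_inv X Y Z ∘ assoc X Y Z = idm _;
  assoc_iso2 : forall X Y Z, assoc X Y Z ∘ assoc_inv X Y Z = idm _;
  assoc_nat : forall X X' Y Y' Z Z' (f : @hom mcat X X') (g : @hom mcat Y Y') (h : @hom mcat Z Z'),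
      assoc X' Y' Z' ∘ tensm _ _ _ _ (tensm _ _ _ _ f g) h
      = tensm _ _ _ _ f (tensm _ _ _ _ g h) ∘ assoc X Y Z;
  lu : forall X, @hom mcat (tens unitob X) X;
  lu_inv : forall X, @hom mcat X (tens unitob X);
  lu_iso1 : forall X, lu_inv X ∘ lu X = idm _;
  lu_iso2 : forall X, lu X ∘ lu_inv X = idm _;
  lu_nat : forall X Y (f : @hom mcat X Y), f ∘ lu X = lu Y ∘ tensm _ _ _ _ (idm unitob) f;
  ru : forall X, @hom mcat (tens X unitob) X;
  ru_inv : forall X, @hom mcat X (tens X unitob);
  ru_iso1 : forall X, ru_inv X ∘ ru X = idm _;
  ru_iso2 : forall X, ru X ∘ ru_inv X = idm _;
  ru_nat : forall X Y (f : @hom mcat X Y), f ∘ ru X = ru Y ∘ tensm _ _ _ _ f (idm unitob);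
  pentagon : forall W X Y Z,
      assoc W X (tens Y Z) ∘ assoc (tens W X) Y Z
      = tensm _ _ _ _ (idm W) (assoc X Y Z) ∘ assoc W (tens X Y) Z
        ∘ tensm _ _ _ _ (assoc W X Y) (idm Z);
  triangle : forall X Y,
      tensm _ _ _ _ (idm X) (lu Y) ∘ assoc X unitob Y = tensm _ _ _ _ (ru X) (idm Y)
}.
Coercion mcat : MonoidalCategory >-> Category.
Arguments tens {m} _ _.
Arguments tensm {m A B C D} _ _.
Arguments unitob {m}.
Arguments assoc {m} X Y Z.
Arguments lu {m} X.
Arguments ru {m} X.
Notation "X ⊗ Y" := (tens X Y) (at level 30, right associativity).
Notation "f ⊗m g" := (tensm f g) (at level 30, right associativity).

Record Functor (C : Category) := {
  fob :> ob C -> ob C;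
  fmap : forall X Y, @hom C X Y -> @hom C (fob X) (fob Y);
  fmap_id : forall X, fmap X X (idm X) = idm (fob X);
  fmap_comp : forall X Y Z (g : @hom C Y Z) (f : @hom C X Y),
      fmap X Z (g ∘ f) = fmap Y Z g ∘ fmap X Y f
}.
Arguments fob {C} _ _.
Arguments fmap {C} f0 {X Y} _.

Definition compF {C : Category} (F G : Functor C) : Functor C.
Proof.
  refine {| fob := fun X => F (G X);
            fmap := fun X Y f => fmap F (fmap G f) |}.
  - intro X. rewrite (fmap_id _ G), (fmap_id _ F). reflexivity.
  - intros X Y Z g f. rewrite (fmap_comp _ G), (fmap_comp _ F). reflexivity.
Defined.

Definition is_comonad {C : Category} (F : Functor C)
    (D : forall X, @hom C (F X) (F (F X))) (e : forall X, @hom C (F X) X) : Prop :=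
  (forall X Y (f : @hom C X Y), D Y ∘ fmap F f = fmap F (fmap F f) ∘ D X) /\
  (forall X Y (f : @hom C X Y), e Y ∘ fmap F f = f ∘ e X) /\
  (forall X, fmap F (D X) ∘ D X = D (F X) ∘ D X) /\
  (forall X, fmap F (e X) ∘ D X = idm (F X)) /\
  (forall X, e (F X) ∘ D X = idm (F X)).

Definition is_monoidal_functor {C : MonoidalCategory} (F : Functor C)
    (F2 : forall X Y : ob C, @hom C (F X ⊗ F Y) (F (X ⊗ Y)))
    (F0 : @hom C unitob (F unitob)) : Prop :=
  (forall X X' Y Y' (f : @hom C X X') (g : @hom C Y Y'),
      F2 X' Y' ∘ (fmap F f ⊗m fmap F g) = fmap F (f ⊗m g) ∘ F2 X Y) /\
  (forall X Y Z,
      fmap F (assoc X Y Z) ∘ F2 (X ⊗ Y) Z ∘ (F2 X Y ⊗m idm (F Z))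
      = F2 X (Y ⊗ Z) ∘ (idm (F X) ⊗m F2 Y Z) ∘ assoc (F X) (F Y) (F Z)) /\
  (forall X, fmap F (lu X) ∘ F2 unitob X ∘ (F0 ⊗m idm (F X)) = lu (F X)) /\
  (forall X, fmap F (ru X) ∘ F2 X unitob ∘ (idm (F X) ⊗m F0) = ru (F X)).

Definition is_bicomonad {C : MonoidalCategory} (G : Functor C)
    (d : forall X, @hom C (G X) (G (G X))) (e : forall X, @hom C (G X) X)
    (G2 : forall X Y : ob C, @hom C (G X ⊗ G Y) (G (X ⊗ Y)))
    (G0 : @hom C unitob (G unitob)) : Prop :=
  is_comonad G d e /\ is_monoidal_functor G G2 G0 /\
  (forall X Y, fmap G (G2 X Y) ∘ G2 (G X) (G Y) ∘ (d X ⊗m d Y) = d (X ⊗ Y) ∘ G2 X Y) /\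
  (forall X Y, e (X ⊗ Y) ∘ G2 X Y = e X ⊗m e Y) /\
  (fmap G G0 ∘ G0 = d unitob ∘ G0) /\
  (e unitob ∘ G0 = idm unitob).

Definition is_distributive_law {C : Category} (F G : Functor C)
    (DF : forall X, @hom C (F X) (F (F X))) (eF : forall X, @hom C (F X) X)
    (DG : forall X, @hom C (G X) (G (G X))) (eG : forall X, @hom C (G X) X)
    (phi : forall X, @hom C (F (G X)) (G (F X))) : Prop :=
  (forall X Y (f : @hom C X Y), phi Y ∘ fmap F (fmap G f) = fmap G (fmap F f) ∘ phi X) /\
  (forall X, fmap G (phi X) ∘ phi (G X) ∘ fmap F (DG X) = DG (F X) ∘ phi X) /\
  (forall X, phi (F X) ∘ fmap F (phi X) ∘ DF (G X) = fmap G (DF X) ∘ phi X) /\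
  (forall X, fmap G (eF X) ∘ phi X = eF (G X)) /\
  (forall X, eG (F X) ∘ phi X = fmap F (eG X)).

Definition is_monoidal_law {C : MonoidalCategory} (F G : Functor C)
    (F2 : forall X Y : ob C, @hom C (F X ⊗ F Y) (F (X ⊗ Y))) (F0 : @hom C unitob (F unitob))
    (G2 : forall X Y : ob C, @hom C (G X ⊗ G Y) (G (X ⊗ Y))) (G0 : @hom C unitob (G unitob))
    (phi : forall X, @hom C (F (G X)) (G (F X))) : Prop :=
  (forall M N, phi (M ⊗ N) ∘ fmap F (G2 M N) ∘ F2 (G M) (G N)
               = fmap G (F2 M N) ∘ G2 (F M) (F N) ∘ (phi M ⊗m phi N)) /\
  (phi unitob ∘ fmap F G0 ∘ F0 = fmap G F0 ∘ G0).

Definition smash_comult {C : Category} (F G : Functor C)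
    (DF : forall X, @hom C (F X) (F (F X))) (DG : forall X, @hom C (G X) (G (G X)))
    (phi : forall X, @hom C (F (G X)) (G (F X)))
    (X : ob C) : @hom C (compF F G X) (compF F G (compF F G X)) :=
  fmap F (phi (G X)) ∘ fmap F (fmap F (DG X)) ∘ DF (G X).

Definition smash_counit {C : Category} (F G : Functor C)
    (eF : forall X, @hom C (F X) X) (eG : forall X, @hom C (G X) X)
    (X : ob C) : @hom C (compF F G X) X :=
  eG X ∘ eF (G X).

Definition smash_mon2 {C : MonoidalCategory} (F G : Functor C)
    (F2 : forall X Y : ob C, @hom C (F X ⊗ F Y) (F (X ⊗ Y)))
    (G2 : forall X Y : ob C, @hom C (G X ⊗ G Y) (G (X ⊗ Y)))
    (M N : ob C) : @hom C (compF F G M ⊗ compF F G N) (compF F G (M ⊗ N)) :=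
  fmap F (G2 M N) ∘ F2 (G M) (G N).

Definition smash_mon0 {C : MonoidalCategory} (F G : Functor C)
    (F0 : @hom C unitob (F unitob)) (G0 : @hom C unitob (G unitob))
    : @hom C unitob (compF F G unitob) :=
  fmap F G0 ∘ F0.


(* The unconditional parts are formal: the smash coproduct of a distributive
   law is a comonad, the composite of monoidal functors is monoidal, and the
   composite counit is monoidal because both counits are.  The content is the
   compatibility of the smash comultiplication with (FG)_2 and (FG)_0.  If phi
   is monoidal, it follows by pushing F_2, G_2 through Delta, delta and phi.
   Conversely, phi is recovered from the smash comultiplication as
   phi_X = G F epsilon_X o varepsilon_{GFGX} o (smash Delta)_X, and the map
   G F epsilon o varepsilon is itself compatible with the monoidal structures,
   so the compatibility of the smash comultiplication transfers to phi. *)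

Lemma comp_eq_postcomp2 {C : Category} {A K D E : C}
    {x : hom K D} {y : hom A K} {z : hom A D} :
  x ∘ y = z -> forall a : hom D E, a ∘ x ∘ y = a ∘ z.
Proof. intros <- a; now rewrite comp_assoc. Qed.

Lemma comp_eq_postcomp3 {C : Category} {A K1 K2 D E : C}
    {x : hom K2 D} {y : hom K1 K2} {w : hom A K1} {z : hom A D} :
  x ∘ y ∘ w = z -> forall a : hom D E, a ∘ x ∘ y ∘ w = a ∘ z.
Proof. intros <- a; now rewrite !comp_assoc. Qed.

Lemma fmap_comp_eq2 {C : Category} (F : Functor C) {A K D : C}
    {x : hom K D} {y : hom A K} {z : hom A D} :
  x ∘ y = z -> fmap F x ∘ fmap F y = fmap F z.
Proof. intros <-; now rewrite fmap_comp. Qed.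

Lemma fmap_comp_eq3 {C : Category} (F : Functor C) {A K1 K2 D : C}
    {x : hom K2 D} {y : hom K1 K2} {w : hom A K1} {z : hom A D} :
  x ∘ y ∘ w = z -> fmap F x ∘ fmap F y ∘ fmap F w = fmap F z.
Proof. intros <-; now rewrite !fmap_comp. Qed.

Ltac comp_norm :=
  cbn [compF fob fmap];
  rewrite ?fmap_comp, ?fmap_id, ?comp_assoc, ?comp_id_l, ?comp_id_r,
          ?comp_assoc.

(* Rewrite with an equation whose left side occurs as a segment of a
   left-associated composite. *)
Tactic Notation "chain_rewrite" open_constr(t) :=
  first [ erewrite t | erewrite (comp_eq_postcomp2 t) | erewrite (comp_eq_postcomp3 t) ];
  comp_norm.

Lemma tensm_comp_idr {C : MonoidalCategory} {A B D Z : C} (a : hom B D) (b : hom A B) :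
  (a ∘ b) ⊗m idm Z = (a ⊗m idm Z) ∘ (b ⊗m idm Z).
Proof. now rewrite <- tensm_comp, comp_id_l. Qed.

Lemma tensm_comp_idl {C : MonoidalCategory} {A B D Z : C} (a : hom B D) (b : hom A B) :
  idm Z ⊗m (a ∘ b) = (idm Z ⊗m a) ∘ (idm Z ⊗m b).
Proof. now rewrite <- tensm_comp, comp_id_l. Qed.

Section MonoidalFunctor.
Context {C : MonoidalCategory} {F : Functor C}
  {F2 : forall X Y : ob C, @hom C (F X ⊗ F Y) (F (X ⊗ Y))} {F0 : @hom C unitob (F unitob)}.
Hypothesis mF : is_monoidal_functor F F2 F0.

Lemma monoidal_natural_l X X' Y (f : hom X X') :
  F2 X' Y ∘ (fmap F f ⊗m idm (F Y)) = fmap F (f ⊗m idm Y) ∘ F2 X Y.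
Proof. rewrite <- (fmap_id _ F Y). apply mF. Qed.

Lemma monoidal_natural_r X Y Y' (f : hom Y Y') :
  F2 X Y' ∘ (idm (F X) ⊗m fmap F f) = fmap F (idm X ⊗m f) ∘ F2 X Y.
Proof. rewrite <- (fmap_id _ F X). apply mF. Qed.

End MonoidalFunctor.

Lemma compF_monoidal {C : MonoidalCategory} {F G : Functor C}
    {F2 : forall X Y : ob C, @hom C (F X ⊗ F Y) (F (X ⊗ Y))} {F0 : @hom C unitob (F unitob)}
    {G2 : forall X Y : ob C, @hom C (G X ⊗ G Y) (G (X ⊗ Y))} {G0 : @hom C unitob (G unitob)} :
  is_monoidal_functor F F2 F0 -> is_monoidal_functor G G2 G0 ->
  is_monoidal_functor (compF F G) (smash_mon2 F G F2 G2) (smash_mon0 F G F0 G0).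
Proof.
  intros mF mG.
  pose proof (monoidal_natural_l mF) as natl.
  pose proof (monoidal_natural_r mF) as natr.
  destruct mF as [natF [assocF [luF ruF]]], mG as [natG [assocG [luG ruG]]].
  unfold smash_mon2, smash_mon0.
  split; [|split; [|split]]; intros.
  - comp_norm. chain_rewrite (natF _ _ _ _ _ _).
    now chain_rewrite (fmap_comp_eq2 F (natG _ _ _ _ _ _)).
  - rewrite !tensm_comp_idr, !tensm_comp_idl. comp_norm.
    chain_rewrite (natl _ _ _ _). chain_rewrite (fmap_comp_eq3 F (assocG _ _ _)).
    chain_rewrite (assocF _ _ _). now chain_rewrite (eq_sym (natr _ _ _ _)).
  - rewrite !tensm_comp_idr. comp_norm.
    chain_rewrite (natl _ _ _ _). chain_rewrite (fmap_comp_eq3 F (luG _)).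
    now chain_rewrite (luF _).
  - rewrite !tensm_comp_idl. comp_norm.
    chain_rewrite (natr _ _ _ _). chain_rewrite (fmap_comp_eq3 F (ruG _)).
    now chain_rewrite (ruF _).
Qed.

Definition smash_extract {C : Category} (F G : Functor C)
    (eF : forall X, @hom C (F X) X) (eG : forall X, @hom C (G X) X)
    (X : C) : @hom C (F (G (F (G X)))) (G (F X)) :=
  fmap G (fmap F (eG X)) ∘ eF (G (F (G X))).

Section SmashComonad.
Context {C : Category} {F G : Functor C}
  {DF : forall X, @hom C (F X) (F (F X))} {eF : forall X, @hom C (F X) X}
  {DG : forall X, @hom C (G X) (G (G X))} {eG : forall X, @hom C (G X) X}
  {phi : forall X, @hom C (F (G X)) (G (F X))}.
Hypotheses (cF : is_comonad F DF eF) (cG : is_comonad G DG eG)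
  (law : is_distributive_law F G DF eF DG eG phi).

Lemma smash_comonad :
  is_comonad (compF F G) (smash_comult F G DF DG phi) (smash_counit F G eF eG).
Proof.
  destruct cF as [natDF [nateF [coassocF [counitlF counitrF]]]],
           cG as [natDG [nateG [coassocG [counitlG counitrG]]]],
           law as [natphi [phi_DG [phi_DF [phi_eF phi_eG]]]].
  unfold smash_comult, smash_counit.
  split; [|split; [|split; [|split]]]; intros.
  - comp_norm. chain_rewrite (natDF _ _ _).
    chain_rewrite (fmap_comp_eq2 F (fmap_comp_eq2 F (natDG _ _ _))).
    now chain_rewrite (fmap_comp_eq2 F (natphi _ _ _)).
  - comp_norm. chain_rewrite (nateF _ _ _). now chain_rewrite (nateG _ _ _).
  - comp_norm.
    chain_rewrite (fmap_comp_eq2 F (eq_sym (phi_DF _))).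
    chain_rewrite (fmap_comp_eq2 F (eq_sym (natphi _ _ (fmap F (DG X))))).
    chain_rewrite (fmap_comp_eq2 F (eq_sym (natphi _ _ (phi (G X))))).
    chain_rewrite (fmap_comp_eq2 F (natDF _ _ (DG X))).
    chain_rewrite (coassocF _).
    chain_rewrite (fmap_comp_eq2 F (fmap_comp_eq2 F (eq_sym (natphi _ _ (DG X))))).
    chain_rewrite (fmap_comp_eq2 F (fmap_comp_eq2 F (fmap_comp_eq2 F (coassocG X)))).
    chain_rewrite (fmap_comp_eq3 F (fmap_comp_eq3 F (phi_DG (G X)))).
    chain_rewrite (natDF _ _ (phi (G X))).
    now chain_rewrite (natDF _ _ (fmap F (DG X))).
  - comp_norm. chain_rewrite (fmap_comp_eq2 F (phi_eF _)).
    chain_rewrite (fmap_comp_eq2 F (nateF _ _ _)).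
    chain_rewrite (fmap_comp_eq2 F (counitlG _)). now chain_rewrite (counitlF _).
  - comp_norm. chain_rewrite (nateF _ _ _). chain_rewrite (nateF _ _ _).
    chain_rewrite (counitrF _). chain_rewrite (phi_eG _).
    now chain_rewrite (fmap_comp_eq2 F (counitrG _)).
Qed.

Lemma smash_extract_comult X :
  smash_extract F G eF eG X ∘ smash_comult F G DF DG phi X = phi X.
Proof.
  destruct cF as [_ [nateF [_ [_ counitrF]]]], cG as [_ [_ [_ [counitlG _]]]],
           law as [natphi _].
  unfold smash_extract, smash_comult. comp_norm.
  chain_rewrite (nateF _ _ _). chain_rewrite (nateF _ _ _). chain_rewrite (counitrF _).
  chain_rewrite (eq_sym (natphi _ _ _)). now chain_rewrite (fmap_comp_eq2 F (counitlG _)).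
Qed.

End SmashComonad.

Section SmashBicomonad.
Context {C : MonoidalCategory} {F G : Functor C}
  {DF : forall X, @hom C (F X) (F (F X))} {eF : forall X, @hom C (F X) X}
  {F2 : forall X Y : ob C, @hom C (F X ⊗ F Y) (F (X ⊗ Y))} {F0 : @hom C unitob (F unitob)}
  {DG : forall X, @hom C (G X) (G (G X))} {eG : forall X, @hom C (G X) X}
  {G2 : forall X Y : ob C, @hom C (G X ⊗ G Y) (G (X ⊗ Y))} {G0 : @hom C unitob (G unitob)}
  {phi : forall X, @hom C (F (G X)) (G (F X))}.
Hypotheses (bF : is_bicomonad F DF eF F2 F0) (bG : is_bicomonad G DG eG G2 G0)
  (law : is_distributive_law F G DF eF DG eG phi).

Lemma smash_counit_mon2 X Y :
  smash_counit F G eF eG (X ⊗ Y) ∘ smash_mon2 F G F2 G2 X Y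
  = smash_counit F G eF eG X ⊗m smash_counit F G eF eG Y.
Proof.
  destruct bF as [[_ [nateF _]] [_ [_ [eF_F2 _]]]], bG as [_ [_ [_ [eG_G2 _]]]].
  unfold smash_counit, smash_mon2. rewrite tensm_comp. comp_norm.
  chain_rewrite (nateF _ _ _). chain_rewrite (eF_F2 _ _). now chain_rewrite (eG_G2 _ _).
Qed.

Lemma smash_counit_mon0 :
  smash_counit F G eF eG unitob ∘ smash_mon0 F G F0 G0 = idm unitob.
Proof.
  destruct bF as [[_ [nateF _]] [_ [_ [_ [_ eF_F0]]]]], bG as [_ [_ [_ [_ [_ eG_G0]]]]].
  unfold smash_counit, smash_mon0. comp_norm.
  chain_rewrite (nateF _ _ _). chain_rewrite eG_G0. now chain_rewrite eF_F0.
Qed.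

Lemma smash_extract_mon2 M N :
  smash_extract F G eF eG (M ⊗ N) ∘ fmap (compF F G) (smash_mon2 F G F2 G2 M N)
    ∘ smash_mon2 F G F2 G2 (compF F G M) (compF F G N)
  = fmap G (F2 M N) ∘ G2 (F M) (F N)
    ∘ (smash_extract F G eF eG M ⊗m smash_extract F G eF eG N).
Proof.
  destruct bF as [[_ [nateF _]] [[natF2 _] [_ [eF_F2 _]]]],
           bG as [_ [[natG2 _] [_ [eG_G2 _]]]].
  unfold smash_extract, smash_mon2. rewrite tensm_comp. comp_norm.
  chain_rewrite (nateF _ _ _). chain_rewrite (nateF _ _ _). chain_rewrite (nateF _ _ _).
  chain_rewrite (eF_F2 _ _).
  chain_rewrite (fmap_comp_eq2 G (fmap_comp_eq2 F (eG_G2 _ _))).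
  chain_rewrite (fmap_comp_eq2 G (eq_sym (natF2 _ _ _ _ _ _))).
  now chain_rewrite (eq_sym (natG2 _ _ _ _ _ _)).
Qed.

Lemma smash_extract_mon0 :
  smash_extract F G eF eG unitob ∘ fmap (compF F G) (smash_mon0 F G F0 G0)
    ∘ smash_mon0 F G F0 G0
  = fmap G F0 ∘ G0.
Proof.
  destruct bF as [[_ [nateF _]] [_ [_ [_ [_ eF_F0]]]]], bG as [_ [_ [_ [_ [_ eG_G0]]]]].
  unfold smash_extract, smash_mon0. comp_norm.
  chain_rewrite (nateF _ _ _). chain_rewrite (nateF _ _ _). chain_rewrite (nateF _ _ _).
  chain_rewrite eF_F0. now chain_rewrite (fmap_comp_eq2 G (fmap_comp_eq2 F eG_G0)).
Qed.

Lemma smash_comult_mon2_iff :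
  (forall M N, phi (M ⊗ N) ∘ fmap F (G2 M N) ∘ F2 (G M) (G N)
               = fmap G (F2 M N) ∘ G2 (F M) (F N) ∘ (phi M ⊗m phi N)) <->
  (forall X Y, fmap (compF F G) (smash_mon2 F G F2 G2 X Y)
                 ∘ smash_mon2 F G F2 G2 (compF F G X) (compF F G Y)
                 ∘ (smash_comult F G DF DG phi X ⊗m smash_comult F G DF DG phi Y)
               = smash_comult F G DF DG phi (X ⊗ Y) ∘ smash_mon2 F G F2 G2 X Y).
Proof.
  split.
  - destruct bF as [[natDF _] [[natF2 _] [DF_F2 _]]], bG as [_ [_ [DG_G2 _]]],
             law as [natphi _].
    intros phi_mon2 M N. unfold smash_comult, smash_mon2. rewrite !tensm_comp. comp_norm.
    chain_rewrite (natF2 _ _ _ _ _ _). chain_rewrite (natF2 _ _ _ _ _ _).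
    chain_rewrite (fmap_comp_eq3 F (eq_sym (phi_mon2 (G M) (G N)))).
    chain_rewrite (fmap_comp_eq2 F (eq_sym (natphi _ _ (G2 M N)))).
    chain_rewrite (fmap_comp_eq2 F (natF2 _ _ _ _ _ _)).
    chain_rewrite (fmap_comp_eq3 F (fmap_comp_eq3 F (DG_G2 M N))).
    chain_rewrite (DF_F2 _ _).
    now chain_rewrite (natDF _ _ (G2 M N)).
  - intros comult_mon2 M N.
    destruct bF as [cF _], bG as [cG _].
    rewrite <- !(smash_extract_comult cF cG law).
    transitivity (smash_extract F G eF eG (M ⊗ N)
                  ∘ (smash_comult F G DF DG phi (M ⊗ N) ∘ smash_mon2 F G F2 G2 M N)).
    { unfold smash_mon2. now rewrite !comp_assoc. }
    rewrite <- comult_mon2, !comp_assoc, smash_extract_mon2.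
    now rewrite <- comp_assoc, <- tensm_comp.
Qed.

Lemma smash_comult_mon0_iff :
  phi unitob ∘ fmap F G0 ∘ F0 = fmap G F0 ∘ G0 <->
  fmap (compF F G) (smash_mon0 F G F0 G0) ∘ smash_mon0 F G F0 G0
  = smash_comult F G DF DG phi unitob ∘ smash_mon0 F G F0 G0.
Proof.
  split.
  - destruct bF as [[natDF _] [_ [_ [_ [DF_F0 _]]]]], bG as [_ [_ [_ [_ [DG_G0 _]]]]],
             law as [natphi _].
    intros phi_mon0. unfold smash_comult, smash_mon0. comp_norm.
    chain_rewrite (natDF _ _ G0). chain_rewrite (eq_sym DF_F0).
    chain_rewrite (fmap_comp_eq2 F (fmap_comp_eq2 F (eq_sym DG_G0))).
    chain_rewrite (fmap_comp_eq2 F (natphi _ _ G0)).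
    now chain_rewrite (fmap_comp_eq3 F phi_mon0).
  - intros comult_mon0.
    destruct bF as [cF _], bG as [cG _].
    rewrite <- (smash_extract_comult cF cG law).
    transitivity (smash_extract F G eF eG unitob
                  ∘ (smash_comult F G DF DG phi unitob ∘ smash_mon0 F G F0 G0)).
    { unfold smash_mon0. now rewrite !comp_assoc. }
    rewrite <- comult_mon0, comp_assoc. exact smash_extract_mon0.
Qed.

End SmashBicomonad.

Theorem lemma3p4 (C : MonoidalCategory) (F G : Functor C)
    (DF : forall X, @hom C (F X) (F (F X))) (eF : forall X, @hom C (F X) X)
    (F2 : forall X Y : ob C, @hom C (F X ⊗ F Y) (F (X ⊗ Y))) (F0 : @hom C unitob (F unitob))
    (DG : forall X, @hom C (G X) (G (G X))) (eG : forall X, @hom C (G X) X)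
    (G2 : forall X Y : ob C, @hom C (G X ⊗ G Y) (G (X ⊗ Y))) (G0 : @hom C unitob (G unitob))
    (phi : forall X, @hom C (F (G X)) (G (F X))) :
  is_bicomonad F DF eF F2 F0 ->
  is_bicomonad G DG eG G2 G0 ->
  is_distributive_law F G DF eF DG eG phi ->
  (is_monoidal_law F G F2 F0 G2 G0 phi <->
   is_bicomonad (compF F G) (smash_comult F G DF DG phi) (smash_counit F G eF eG)
                (smash_mon2 F G F2 G2) (smash_mon0 F G F0 G0)).
Proof.
  intros bF bG law.
  destruct (smash_comult_mon2_iff bF bG law) as [comult_mon2_of_law law_of_comult_mon2],
           (smash_comult_mon0_iff bF bG law) as [comult_mon0_of_law law_of_comult_mon0].
  split.
  - intros [phi_mon2 phi_mon0].
    refine (conj _ (conj _ (conj _ (conj _ (conj _ _))))).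
    + exact (smash_comonad (proj1 bF) (proj1 bG) law).
    + exact (compF_monoidal (proj1 (proj2 bF)) (proj1 (proj2 bG))).
    + exact (comult_mon2_of_law phi_mon2).
    + exact (smash_counit_mon2 bF bG).
    + exact (comult_mon0_of_law phi_mon0).
    + exact (smash_counit_mon0 bF bG).
  - intros (_ & _ & comult_mon2 & _ & comult_mon0 & _).
    exact (conj (law_of_comult_mon2 comult_mon2) (law_of_comult_mon0 comult_mon0)).
Qed.
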